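(* Let $n,p,d$ be positive integers with $n>p$, and let $$H=\frac{\det(P(t^{d-1}))}{t^{(d-1)\binom{p-1}{2}}}\frac{(1-t^d)^p(1-t^{d-1})^{n-p}}{(1-t)^n},$$ where $P(t)$ is the $(p-1)\times(p-1)$ matrix whose $(i,j)$ entry is $\sum_{k\ge0}\binom{p-i}{k}\binom{n-1-j}{k}t^k$. Then $H$ is a unimodal polynomial.
   Context: A polynomial $\sum_{k=0}^n a_kt^k$ with non-negative real coefficients is unimodal if there is an integer $N$ with $a_k\le a_{k+1}\le a_N$ for all $k<N$ and $a_N\ge a_k\ge a_{k+1}$ for all $k\ge N$. ($H$ is the Hilbert series of a generic determinantal ideal with parameters $(n,p,d)$.) *)

From mathcomp Require Import all_boot all_order all_algebra.
Set Implicit Arguments. Unset Strict Implicit. Unset Printing Implicit Defensive.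
Import Order.TTheory GRing.Theory Num.Theory.
Local Open Scope ring_scope.

Definition unimodal (R : realDomainType) (q : {poly R}) : Prop :=
  (forall k : nat, 0 <= q`_k) /\
  exists N : nat,
    (forall k : nat, (k < N)%N -> q`_k <= q`_k.+1 /\ q`_k.+1 <= q`_N) /\
    (forall k : nat, (N <= k)%N -> q`_k.+1 <= q`_k /\ q`_k <= q`_N).

(* With 0-based Rocq indices i,j the
   paper's indices are i+1, j+1.  Since p-(i+1) < p, the terms with k >= p
   vanish, so the sum over k < p is the full sum. *)
Definition Pmat (n p : nat) : 'M[{poly rat}]_(p.-1) :=
  \matrix_(i < p.-1, j < p.-1)
    \sum_(k < p) ('C(p - i.+1, k) * 'C(n.-1 - j.+1, k))%:R *: 'X^k.

From mathcomp Require Import all_boot all_order all_algebra.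
From mathcomp Require Import zify ring lra.
Import Order.TTheory GRing.Theory Num.Theory.
Set Implicit Arguments. Unset Strict Implicit. Unset Printing Implicit Defensive.
Local Open Scope ring_scope.

(* Writing [p = r + 1] and [n = m + r + 1], the matrix [P(t)] factors as
   [A diag(1, t, ..., t^r) B^T] with binomial matrices [A = (C(r-i, k))] and
   [B = (C(m+r-1-j, k))]. By Vandermonde's identity both factors split off the same
   unitriangular Pascal matrix, and what remains is [t^C(r,2)] times a Hessenberg
   matrix whose determinant obeys the Pascal recursion of [h_(m,r)], the degree-[r]
   truncation of [(1-t)^-m]. Hence [H = h_(m,r)(t^e) [e]^m [e+1]^(r+1)] with
   [e = d - 1] and [[L] = 1 + t + ... + t^(L-1)]. The coefficients of [h_(m,r)]
   increase, so [h_(m,r)(t^e) [e]] is a nondecreasing staircase, and multiplying a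
   unimodal polynomial with nonnegative coefficients by [[L]] keeps it unimodal. *)

Section GeomPoly.
Variable R : nzRingType.
Implicit Types (a : {poly R}) (L : nat).

Definition geom_poly L : {poly R} := \poly_(j < L) 1.

Lemma geom_polyM1BX L : geom_poly L * (1 - 'X) = 1 - 'X^L.
Proof.
rewrite /geom_poly poly_def.
elim: L => [|L IH]; first by rewrite big_ord0 mul0r expr0 subrr.
by rewrite big_ord_recr /= mulrDl IH scale1r exprSr mulrBr mulr1 addrA subrK.
Qed.

Lemma coef_mul_geom_polyS a L k :
  (a * geom_poly L)`_k.+1 - (a * geom_poly L)`_k =
  a`_k.+1 - (if (k.+1 < L)%N then 0 else a`_(k.+1 - L)).
Proof.
have := congr1 (fun q => (a * q)`_k.+1) (geom_polyM1BX L).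
by rewrite /= mulrA mulrBr mulr1 mulrBr mulr1 !coefB coefMX coefMXn.
Qed.

Lemma coef_comp_Xn_mul_geom_poly a e k : (0 < e)%N ->
  ((a \Po 'X^e) * geom_poly e)`_k = a`_(k %/ e).
Proof.
move=> e_gt0; rewrite coefM.
have j0_lt : (k %/ e * e < k.+1)%N by rewrite ltnS leq_divM.
rewrite (bigD1 (Ordinal j0_lt)) //= big1 ?addr0 => [|j /eqP j_neq].
  rewrite coef_comp_poly_Xn // coef_poly dvdn_mull // mulnK //.
  have -> : (k - k %/ e * e = k %% e)%N by rewrite {1}(divn_eq k e) addKn.
  by rewrite ltn_pmod // mulr1.
rewrite coef_comp_poly_Xn // coef_poly.
have [/dvdnP[q j_eq]|] := boolP (e %| j)%N; last by rewrite mul0r.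
have [kj_lt_e|] := ltnP (k - j)%N e; last by rewrite mulr0.
exfalso; apply: j_neq; apply: val_inj => /=.
have : (j <= k)%N by rewrite -ltnS.
rewrite j_eq in kj_lt_e * => jk.
by rewrite -[k](subnKC jk) divnMDl // divn_small // addn0.
Qed.

End GeomPoly.

Section Unimodality.
Variable R : realDomainType.
Implicit Types (a c : {poly R}) (N L : nat).

Definition peak_at a N : Prop :=
  (forall k, (k < N)%N -> a`_k <= a`_k.+1) /\
  (forall k, (N <= k)%N -> a`_k.+1 <= a`_k).

Lemma peak_at_le a N i j : peak_at a N -> (i <= j <= N)%N -> a`_i <= a`_j.
Proof.
move=> [up _] /andP[ij jN].
have mono : {in [pred k | k <= N]%N &,
    {homo (fun k => a`_k) : i j / (i <= j)%N >-> i <= j}}.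
  apply: homo_leq_in; [exact: lexx | exact: le_trans | | by move=> k _; exact: up].
  by move=> ? l _ lN k /andP[_ /ltnW kl]; exact: leq_trans kl lN.
by apply: mono; rewrite ?inE // (leq_trans ij).
Qed.

Lemma peak_at_ge a N i j : peak_at a N -> (N <= i <= j)%N -> a`_j <= a`_i.
Proof.
move=> [_ down] /andP[Ni ij].
have mono : {in [pred k | N <= k]%N &,
    {homo (fun k => a`_k) : i j / (i <= j)%N >-> j <= i}}.
  apply: homo_leq_in; [exact: lexx | by move=> y x z /[swap]; exact: le_trans |
    | by move=> k Nk _; exact: down].
  by move=> l ? Nl _ k /andP[/ltnW lk _]; exact: leq_trans Nl lk.
by apply: mono; rewrite ?inE // (leq_trans Ni).
Qed.

Lemma peak_at_unimodal a N :
  (forall k, 0 <= a`_k) -> peak_at a N -> unimodal a.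
Proof.
move=> a_ge0 peak; split=> //; exists N.
have [up down] := peak.
split=> k kN; split; [exact: up | | exact: down | ].
- by apply: (peak_at_le peak); rewrite kN leqnn.
- by apply: (peak_at_ge peak); rewrite leqnn kN.
Qed.

Lemma unimodal_peak_at a : unimodal a -> exists N, peak_at a N.
Proof.
case=> _ [N [rise fall]]; exists N.
by split=> k kN; [exact: (rise k kN).1 | exact: (fall k kN).1].
Qed.

Lemma unimodal0 : unimodal (0 : {poly R}).
Proof. by apply: (@peak_at_unimodal _ 0) => [k|]; [|split=> k]; rewrite !coef0. Qed.

Lemma peak_at_of_drop_absorbing c :
  (forall i k, c`_i.+1 < c`_i -> (i <= k)%N -> c`_k.+1 <= c`_k) ->
  exists N, peak_at c N.
Proof.
move=> absorbing.
have [/existsP[i drop_i]|no_drop] := boolP [exists i : 'I_(size c), c`_i.+1 < c`_i].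
  have ex_drop : exists k, c`_k.+1 < c`_k by exists i.
  case: (ex_minnP ex_drop) => N drop_N first_drop.
  exists N; split=> k kN; last exact: absorbing drop_N kN.
  by rewrite leNgt; apply/negP => /first_drop; rewrite leqNgt kN.
exists (size c); split=> k kc.
  rewrite leNgt; apply/negP => drop_k.
  by move/existsP: no_drop; apply; exists (Ordinal kc).
by rewrite !nth_default // (leq_trans kc).
Qed.

Lemma coef_mul_ge0 a c :
  (forall k, 0 <= a`_k) -> (forall k, 0 <= c`_k) -> forall k, 0 <= (a * c)`_k.
Proof. by move=> a_ge0 c_ge0 k; rewrite coefM sumr_ge0 // => j _; exact: mulr_ge0. Qed.

Lemma coef_geom_poly_ge0 L k : 0 <= (geom_poly R L)`_k.
Proof. by rewrite coef_poly; case: ifP. Qed.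

(* The increments of [a * (1 + X + ... + X^(L-1))] are [a_(k+1) - a_(k+1-L)]; once one of
   them is negative, [k+1] lies past the peak of [a], and no later increment is positive. *)
Lemma unimodal_mul_geom_poly a L : unimodal a -> unimodal (a * geom_poly R L).
Proof.
move=> ua; have [a_ge0 _] := ua; have [N peak] := unimodal_peak_at ua.
have c_ge0 := coef_mul_ge0 a_ge0 (coef_geom_poly_ge0 L).
suff [N' peak_c] : exists N', peak_at (a * geom_poly R L) N'.
  exact: peak_at_unimodal c_ge0 peak_c.
apply: peak_at_of_drop_absorbing => i k drop_i ik.
have Di := coef_mul_geom_polyS a L i; have Dk := coef_mul_geom_polyS a L k.
have Li : (L <= i.+1)%N.
  by rewrite leqNgt; apply/negP => iL; move: Di; rewrite iL; have := a_ge0 i.+1; lra.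
rewrite ltnNge Li /= in Di; rewrite ltnNge (leq_trans Li) /= in Dk; last by [].
have {}drop_i : a`_i.+1 < a`_(i.+1 - L) by lra.
suff : a`_k.+1 <= a`_(k.+1 - L) by lra.
have N_lt_i : (N < i.+1)%N.
  rewrite ltnNge; apply/negP => iN.
  suff : a`_(i.+1 - L) <= a`_i.+1 by rewrite leNgt drop_i.
  by apply: (peak_at_le peak); rewrite leq_subr.
have [NkL|kLN] := leqP N (k.+1 - L).
  by apply: (peak_at_ge peak); rewrite NkL leq_subr.
have fall_ik : a`_k.+1 <= a`_i.+1.
  by apply: (peak_at_ge peak); rewrite (ltnW N_lt_i) ltnS.
have rise_ik : a`_(i.+1 - L) <= a`_(k.+1 - L).
  by apply: (peak_at_le peak); rewrite leq_sub2r ?ltnS // (ltnW kLN).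
lra.
Qed.

Lemma unimodal_mul_geom_polyXn a L j :
  unimodal a -> unimodal (a * geom_poly R L ^+ j).
Proof.
elim: j a => [|j IH] a ua; first by rewrite expr0 mulr1.
by rewrite exprS mulrA; apply/IH/unimodal_mul_geom_poly.
Qed.

Lemma unimodal_comp_Xn_mul_geom_poly a e :
  unimodal a -> unimodal ((a \Po 'X^e) * geom_poly R e).
Proof.
case: (posnP e) => [->|e_gt0] ua.
  by rewrite [geom_poly _ _]poly_def big_ord0 mulr0; exact: unimodal0.
have [a_ge0 _] := ua; have [N peak] := unimodal_peak_at ua.
apply: (@peak_at_unimodal _ (N.+1 * e).-1) => [k|].
  by rewrite coef_comp_Xn_mul_geom_poly.
rewrite mulSn; split=> k k_bound; rewrite !coef_comp_Xn_mul_geom_poly //.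
  rewrite (peak_at_le peak) // leq_div2r //= -ltnS ltn_divLR // mulSn; lia.
by rewrite (peak_at_ge peak) // leq_div2r ?andbT // leq_divRL //; lia.
Qed.

End Unimodality.

(* [shift_bin m l k] is the coefficient of [X^k] in [X^l * (1 + X)^m], i.e. ['C(m, k - l)]
   without the truncated subtraction. *)
Definition shift_bin (m l k : nat) : nat := if (l <= k)%N then 'C(m, k - l) else 0.

Lemma shift_binSS m l k : shift_bin m l.+1 k.+1 = shift_bin m l k.
Proof. by rewrite /shift_bin ltnS subSS. Qed.

Lemma shift_bin_r0 m l : shift_bin m l 0 = (l == 0)%N.
Proof. by rewrite /shift_bin; case: l => [|l] //=; rewrite subn0 bin0. Qed.

Lemma shift_binS m l k :
  shift_bin m.+1 l k.+1 = (shift_bin m l k.+1 + shift_bin m l k)%N.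
Proof.
rewrite /shift_bin; case: (ltngtP l k.+1) => [lk|kl|->].
- by rewrite ltnS in lk; rewrite lk subSn // binS.
- by rewrite leqNgt (ltnW kl).
- by rewrite subnn ltnn !bin0.
Qed.

Lemma shift_bin0 l k : shift_bin 0 l k = (l == k).
Proof.
rewrite /shift_bin bin0n; case: (ltngtP l k) => [lk|//|->]; last by rewrite subnn.
by rewrite subn_eq0 leqNgt lk.
Qed.

Lemma shift_bin1 l k : shift_bin 1 l k = ((k == l) + (k == l.+1))%N.
Proof.
case: k => [|k]; first by rewrite shift_bin_r0 /= addn0 eq_sym.
by rewrite shift_binS !shift_bin0 eqSS (eq_sym l) (eq_sym l).
Qed.

Lemma shift_bin_eq m a b c d : (a + d = c + b)%N -> shift_bin m a b = shift_bin m c d.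
Proof.
move=> e; rewrite /shift_bin.
case: (leqP a b) => ab; case: (leqP c d) => cd //; try lia.
by congr 'C(_, _); lia.
Qed.

Lemma sumn_ord_widen0 n1 n2 (F : nat -> nat) : (n1 <= n2)%N ->
  (forall u, (n1 <= u)%N -> F u = 0%N) -> (\sum_(u < n1) F u = \sum_(u < n2) F u)%N.
Proof.
move=> n12 F0; rewrite -!(big_mkord xpredT) (big_cat_nat (leq0n n1) n12) /=.
rewrite -[LHS]addn0; congr (_ + _)%N.
by rewrite big_nat_cond big1 // => u /andP[/andP[/F0]].
Qed.

Lemma sum_bin_mul_shift_bin a b k n : (a < n)%N ->
  (\sum_(u < n) 'C(a, u) * shift_bin b u k)%N = 'C(a + b, k).
Proof.
move=> an; rewrite -binomial.Vandermonde.
have -> : (\sum_(u < k.+1) 'C(a, u) * 'C(b, k - u) =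
           \sum_(u < k.+1) 'C(a, u) * shift_bin b u k)%N.
  by apply: eq_bigr => u _; rewrite /shift_bin -ltnS ltn_ord.
pose F u := ('C(a, u) * shift_bin b u k)%N.
rewrite (@sumn_ord_widen0 n (n + k.+1) F) ?leq_addr //; last first.
  by move=> u nu; rewrite /F bin_small ?mul0n // (leq_trans an).
rewrite [RHS](@sumn_ord_widen0 k.+1 (n + k.+1) F) ?leq_addl // => u ku.
by rewrite /F /shift_bin leqNgt ku muln0.
Qed.

Section HessenbergDeterminant.
Variable R : comNzRingType.
Implicit Types (m r : nat).

(* The truncation to degree [r] of the series of [(1 - X)^-m]; the truncated subtraction
   [m + k - 1] makes [negbin_trunc 0 r = 1]. *)
Definition negbin_trunc m r : {poly R} := \poly_(k < r.+1) ('C(m + k - 1, k))%:R.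

Lemma negbin_trunc0 r : negbin_trunc 0 r = 1.
Proof.
apply/polyP => k; rewrite coef_poly coef1; case: k => [|k] /=; first by rewrite bin0.
by rewrite add0n subSS subn0 bin_small // if_same.
Qed.

Lemma negbin_trunc_r0 m : negbin_trunc m 0 = 1.
Proof. by apply/polyP => k; rewrite coef_poly coef1; case: k => [|k] //=; rewrite bin0. Qed.

Lemma negbin_truncS m r :
  negbin_trunc m.+1 r.+1 = negbin_trunc m r.+1 + 'X * negbin_trunc m.+1 r.
Proof.
apply/polyP => k; rewrite coefD coefXM !coef_poly; case: k => [|k] /=.
  by rewrite !bin0 addr0.
rewrite ltnS !addSn !addnS !subSS !subn0 binS natrD.
by case: ifP; rewrite ?addr0.
Qed.

Definition hess_mx m r : 'M[{poly R}]_r :=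
  \matrix_(l, l') ((shift_bin m l l')%:R + 'X * (shift_bin m l l'.+1)%:R).

Definition upper_bidiag_mx r : 'M[{poly R}]_r :=
  \matrix_(i, j) ((i == j :> nat) + (i.+1 == j))%:R.

Lemma det_upper_bidiag_mx r : \det (upper_bidiag_mx r) = 1.
Proof.
rewrite -det_tr det_trig.
  by apply: big1 => i _; rewrite !mxE eqxx gtn_eqF.
apply/forallP => i; apply/forallP => j; apply/implyP => ij.
by rewrite !mxE gtn_eqF // gtn_eqF // ltnW.
Qed.

Lemma hess_mxS m r i j : hess_mx m.+1 r i j =
  (hess_mx m r *m upper_bidiag_mx r) i j + ((i == 0 :> nat) && (j == 0 :> nat))%:R * 'X.
Proof.
rewrite !mxE; under eq_bigr => u _ do rewrite !mxE natrD mulrDr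
  (mulr_natr _ (u == j :> nat)) (mulr_natr _ (u.+1 == j :> nat)) !mulrb.
pose F u : {poly R} := (shift_bin m i u)%:R + 'X * (shift_bin m i u.+1)%:R.
rewrite big_split /= -!big_mkcond (big_ord1_eq _ F) ltn_ord.
case: j => [[|j] j_lt] /=.
  rewrite big_pred0 => [|u]; last by [].
  by rewrite /F !shift_binS !shift_bin_r0 !natrD andbT; ring.
under eq_bigl => u do rewrite eqSS.
rewrite (big_ord1_eq _ F) ltnW // /F shift_binS (shift_binS m i j.+1) !natrD.
by rewrite andbF mul0r addr0; ring.
Qed.

Lemma det_hess_mx0 r : \det (hess_mx 0 r) = 1.
Proof.
rewrite det_trig.
  by apply: big1 => i _; rewrite !mxE !shift_bin0 eqxx ltn_eqF // mulr0 addr0.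
apply/forallP => i; apply/forallP => j; apply/implyP => ij.
by rewrite !mxE !shift_bin0 ltn_eqF // ltn_eqF ?mulr0 ?addr0 // ltnW.
Qed.

Lemma det_hess_mxS m r :
  \det (hess_mx m.+1 r.+1) = \det (hess_mx m r.+1) + 'X * \det (hess_mx m.+1 r).
Proof.
set A := hess_mx m.+1 r.+1; set B := hess_mx m r.+1 *m upper_bidiag_mx r.+1.
have -> : \det (hess_mx m r.+1) = \det B by rewrite det_mulmx det_upper_bidiag_mx mulr1.
have AB x y : A x y = B x y + ((x == 0 :> nat) && (y == 0 :> nat))%:R * 'X := hess_mxS m x y.
have cofA00 : cofactor A ord0 ord0 = \det (hess_mx m.+1 r).
  rewrite /cofactor /= expr0 mul1r; congr (\det _).
  by apply/matrixP => x y; rewrite !mxE /= !shift_binSS.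
clearbody A B.
have cofAB j : cofactor A ord0 j = cofactor B ord0 j.
  rewrite /cofactor; congr (_ * \det _); apply/matrixP => x y.
  by rewrite !mxE AB /= mul0r addr0.
rewrite (expand_det_row A ord0) (expand_det_row B ord0) !big_ord_recl.
under eq_bigr => j _ do rewrite cofAB AB /= mul0r addr0.
by rewrite AB /= -(cofAB ord0) cofA00 mul1r mulrDl addrAC.
Qed.

Lemma det_hess_mx m r : \det (hess_mx m r) = negbin_trunc m r.
Proof.
elim: m r => [|m IHm] r; first by rewrite det_hess_mx0 negbin_trunc0.
elim: r => [|r IHr]; first by rewrite det_mx00 negbin_trunc_r0.
by rewrite det_hess_mxS IHm IHr negbin_truncS.
Qed.

End HessenbergDeterminant.

Section BinomialFactorization.
Variables (R : comNzRingType) (r : nat).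

Definition bin_mx c : 'M[{poly R}]_(r, r.+1) := \matrix_(i, k) ('C(c + r - i.+1, k))%:R.

Definition shift_bin_mx c : 'M[{poly R}]_(r, r.+1) :=
  \matrix_(u, k) (shift_bin c (r - u.+1) k)%:R.

Definition pascal_mx : 'M[{poly R}]_r := \matrix_(i, u) ('C(r - i.+1, r - u.+1))%:R.

Definition powX_diag_mx : 'M[{poly R}]_r.+1 := diag_mx (\row_k 'X^k).

Lemma bin_mx_pascal c : bin_mx c = pascal_mx *m shift_bin_mx c.
Proof.
apply/matrixP => i k; rewrite !mxE.
under eq_bigr do rewrite !mxE -natrM.
rewrite -natr_sum; congr (_%:R).
have i_lt := ltn_ord i.
have -> : (c + r - i.+1 = r - i.+1 + c)%N by rewrite [RHS]addnC addnBA.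
rewrite -(@sum_bin_mul_shift_bin _ _ _ r); last by rewrite ltn_subrL (leq_ltn_trans _ i_lt).
by rewrite (reindex_inj rev_ord_inj).
Qed.

Lemma det_pascal_mx : \det pascal_mx = 1.
Proof.
rewrite -det_tr det_trig.
  by apply: big1 => i _; rewrite !mxE binn.
apply/forallP => i; apply/forallP => j; apply/implyP => ij.
by rewrite !mxE bin_small //; have := ltn_ord j; lia.
Qed.

Lemma shift_bin_mx_mul m :
  shift_bin_mx 1 *m powX_diag_mx *m (shift_bin_mx m)^T =
  diag_mx (\row_u 'X^(r - u.+1)) *m hess_mx R m r.
Proof.
apply/matrixP => u u'; rewrite mul_diag_mx !mxE.
set s := (r - u.+1)%N; set s' := (r - u'.+1)%N.
pose F k : {poly R} := 'X^k * (shift_bin m s' k)%:R.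
under eq_bigr => k _ do
  rewrite mul_mx_diag !mxE shift_bin1 natrD !mulrDl -!mulrA -/(F k) !mulr_natl !mulrb.
rewrite big_split /= -!big_mkcond !(big_ord1_eq _ F) !ltnS leq_subr -/s.
have u_lt := ltn_ord u; have u'_lt := ltn_ord u'.
rewrite ifT; last by rewrite /s; lia.
rewrite /F -/s (@shift_bin_eq m s' s u u') ?(@shift_bin_eq m s' s.+1 u u'.+1) //; try lia.
by rewrite exprS mulrDr mulrA [_ * 'X]mulrC.
Qed.

Lemma det_bin_mx_mul m :
  \det (bin_mx 1 *m powX_diag_mx *m (bin_mx m)^T) = 'X^('C(r, 2)) * negbin_trunc R m r.
Proof.
rewrite !bin_mx_pascal trmx_mul.
have -> : pascal_mx *m shift_bin_mx 1 *m powX_diag_mx *m ((shift_bin_mx m)^T *m pascal_mx^T)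
    = pascal_mx *m (shift_bin_mx 1 *m powX_diag_mx *m (shift_bin_mx m)^T) *m pascal_mx^T.
  by rewrite !mulmxA.
rewrite !det_mulmx det_tr det_pascal_mx mul1r mulr1 shift_bin_mx_mul det_mulmx.
rewrite det_hess_mx det_diag; congr (_ * _).
under eq_bigr do rewrite mxE.
by rewrite -expr_sum -bin2_sum big_mkord [in RHS](reindex_inj rev_ord_inj).
Qed.

End BinomialFactorization.

Lemma det_Pmat m r : \det (Pmat (m + r.+1) r.+1) = 'X^('C(r, 2)) * negbin_trunc _ m r.
Proof.
rewrite -det_bin_mx_mul; congr (\det _); apply/matrixP => i j; rewrite !mxE.
apply: eq_bigr => k _.
by rewrite mul_mx_diag !mxE subSS addnS /= scaler_nat mulr_natl mulr_natr -mulrnA.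
Qed.

Lemma unimodal_negbin_trunc (R : realDomainType) m r :
  (0 < m)%N -> unimodal (negbin_trunc R m r).
Proof.
case: m => [//|m] _; apply: (@peak_at_unimodal _ _ r) => [k|].
  by rewrite coef_poly; case: ifP.
split=> k kr; rewrite !coef_poly.
  by rewrite !ltnS kr ltnW // ler_nat addSn subSS subn0 addnS subSS subn0 binS leq_addl.
rewrite ifF; last by rewrite ltnS ltnNge kr.
by case: ifP.
Qed.

Lemma geom_poly_clear_denominators (R : comNzRingType) (h c : {poly R}) d e k l :
  h * geom_poly R e * geom_poly R d ^+ k * geom_poly R e ^+ l * c * (1 - 'X) ^+ (l.+1 + k) =
  c * h * (1 - 'X^d) ^+ k * (1 - 'X^e) ^+ l.+1.
Proof. by rewrite -!geom_polyM1BX !exprMn exprD !exprS; ring. Qed.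

Theorem lemma9 (n p d : nat) (hn : (0 < n)%N) (hp : (0 < p)%N) (hd : (0 < d)%N)
  (hnp : (p < n)%N) :
  exists q : {poly rat},
    q * 'X^((d.-1) * 'C(p.-1, 2)) * (1 - 'X) ^+ n =
      \det (map_mx (fun f : {poly rat} => f \Po 'X^(d.-1)) (Pmat n p))
      * (1 - 'X^d) ^+ p * (1 - 'X^(d.-1)) ^+ (n - p)
    /\ unimodal q.
Proof.
case: p hp hnp => [//|r] _ hnp.
have [m ->] : exists m, n = (m.+1 + r.+1)%N by exists (n - r.+2)%N; lia.
case: d hd => [//|e] _; rewrite addnK /=.
rewrite (det_map_mx (comp_poly (R:=rat) 'X^e)) det_Pmat rmorphM /= comp_Xn_poly -exprM.
exists ((negbin_trunc rat m.+1 r \Po 'X^e) * geom_poly rat e * geom_poly rat e.+1 ^+ r.+1 *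
        geom_poly rat e ^+ m).
split; first exact: geom_poly_clear_denominators.
apply/unimodal_mul_geom_polyXn/unimodal_mul_geom_polyXn/unimodal_comp_Xn_mul_geom_poly.
exact: unimodal_negbin_trunc.
Qed.
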